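(* Let $(G,g)$ be an eight-dimensional semi-Riemannian Lie group with a subgroup $K\cong\mathrm{SU}(2)\times\mathrm{SL}_2(\mathbb R)$ generating a left-invariant conformal foliation $\mathcal F$ on $G$. Let $\mathfrak g=\mathfrak k\oplus\mathfrak m$ be the orthogonal decomposition of the Lie algebra of $G$ with $\mathfrak k=\mathfrak{su}(2)\times\mathfrak{sl}_2(\mathbb R)$, and let $\{A,B,C,R,S,T,X,Y\}$ be an orthonormal basis for $\mathfrak g$ such that $A,B,C$ span $\mathfrak{su}(2)$ and $R,S,T$ span $\mathfrak{sl}_2(\mathbb R)$, with $[A,B]=2C$, $[C,A]=2B$, $[B,C]=2A$, $[R,S]=2T$, $[T,R]=2S$, $[S,T]=-2R$. In this setting the brackets have the form $[A,X]=-b_{11}B-c_{11}C$, $[A,Y]=-b_{21}B-c_{21}C$, $[B,X]=b_{11}A-c_{12}C$, $[B,Y]=b_{21}A-c_{22}C$, $[C,X]=c_{11}A+c_{12}B$, $[C,Y]=c_{21}A+c_{22}B$, $[R,X]=s_{14}S+t_{14}T$, $[R,Y]=s_{24}S+t_{24}T$, $[S,X]=s_{14}R-t_{15}T$, $[S,Y]=s_{24}R-t_{25}T$, $[T,X]=t_{14}R+t_{15}S$, $[T,Y]=t_{24}R+t_{25}S$ for real numbers $b_{ij},c_{ij},s_{ij},t_{ij}$. Then the foliation $\mathcal F$ is both semi-Riemannian and minimal. Moreover, $\mathcal F$ is totally geodesic if and only if all of the following hold: $$0=(\varepsilon_B-\varepsilon_A)b_{11}=(\varepsilon_B-\varepsilon_A)b_{21}=(\varepsilon_C-\varepsilon_A)c_{11}=(\varepsilon_C-\varepsilon_A)c_{21}=(\varepsilon_C-\varepsilon_B)c_{12}=(\varepsilon_C-\varepsilon_B)c_{22},$$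 $$0=(\varepsilon_S+\varepsilon_R)s_{14}=(\varepsilon_S+\varepsilon_R)s_{24}=(\varepsilon_T+\varepsilon_R)t_{14}=(\varepsilon_T+\varepsilon_R)t_{24}=(\varepsilon_T-\varepsilon_S)t_{15}=(\varepsilon_T-\varepsilon_S)t_{25}.$$
   Context: A semi-Riemannian Lie group $(G,g)$ is a Lie group with a left-invariant non-degenerate metric $g$ of arbitrary signature; its Lie algebra is identified with the left-invariant vector fields. $K$ generates the left-invariant foliation $\mathcal F$ by left translates of $K$, with tangent distribution $\mathcal V$ spanned by $\mathfrak k$ and orthogonal complement $\mathcal H$ spanned by $\mathfrak m$; $\mathcal V,\mathcal H$ also denote orthogonal projections. Orthonormal means $g(E_i,E_j)=\varepsilon_{E_i}\delta_{ij}$, $\varepsilon_{E_i}=g(E_i,E_i)\in\{\pm1\}$. With $\nabla$ the Levi-Civita connection: $B^{\mathcal H}(E,F)=\tfrac12\mathcal V(\nabla_EF+\nabla_FE)$ ($E,F\in\mathcal H$), $B^{\mathcal V}(E,F)=\tfrac12\mathcal H(\nabla_EF+\nabla_FE)$ ($E,F\in\mathcal V$). $\mathcal F$ is conformal if $B^{\mathcal H}=g\otimes V$ for some vector field $V$ in $\mathcal V$, semi-Riemannian if $B^{\mathcal H}=0$, minimal if $\sum_k\varepsilon_{V_k}B^{\mathcal V}(V_k,V_k)=0$ for an orthonormal basis $\{V_k\}$ of $\mathcal V$, and totally geodesic if $B^{\mathcal V}=0$. *)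

(* Lie-algebra-level model of a left-invariant semi-Riemannian
   metric on an 8-dimensional Lie group, in coordinates w.r.t. an orthonormal
   basis e_0..e_7 = A,B,C,R,S,T,X,Y. *)
From HB Require Import structures.
From mathcomp Require Import all_boot all_order all_algebra.
From mathcomp Require Import reals.
Set Implicit Arguments. Unset Strict Implicit. Unset Printing Implicit Defensive.
Import Order.TTheory GRing.Theory Num.Theory.
Local Open Scope ring_scope.

Definition iA : 'I_8 := @Ordinal 8 0 erefl.
Definition iB : 'I_8 := @Ordinal 8 1 erefl.
Definition iC : 'I_8 := @Ordinal 8 2 erefl.
Definition iR : 'I_8 := @Ordinal 8 3 erefl.
Definition iS : 'I_8 := @Ordinal 8 4 erefl.
Definition iT : 'I_8 := @Ordinal 8 5 erefl.
Definition iX : 'I_8 := @Ordinal 8 6 erefl.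
Definition iY : 'I_8 := @Ordinal 8 7 erefl.

Definition e (R : realType) (i : 'I_8) : 'rV[R]_8 := delta_mx 0 i.

Definition metric (R : realType) (eps : 'I_8 -> R) (u v : 'rV[R]_8) : R :=
  \sum_i eps i * u 0 i * v 0 i.

Definition signs (R : realType) (eps : 'I_8 -> R) : Prop :=
  forall i, eps i = 1 \/ eps i = -1.

Definition is_lie_bracket (R : realType) (br : 'rV[R]_8 -> 'rV[R]_8 -> 'rV[R]_8) : Prop :=
  (forall a u v w, br (a *: u + v) w = a *: br u w + br v w) /\
  (forall a u v w, br w (a *: u + v) = a *: br w u + br w v) /\
  (forall u v, br u v = - br v u) /\
  (forall u v w, br u (br v w) + br v (br w u) + br w (br u v) = 0).

(* nabla is the Levi-Civita connection on left-invariant vector fields: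
   torsion free and metric (g(v,w) is constant for left-invariant v, w). *)
Definition is_levi_civita (R : realType) (eps : 'I_8 -> R)
  (br nabla : 'rV[R]_8 -> 'rV[R]_8 -> 'rV[R]_8) : Prop :=
  (forall u v, nabla u v - nabla v u = br u v) /\
  (forall u v w, metric eps (nabla u v) w + metric eps v (nabla u w) = 0).

(* orthogonal projections onto V = k = span(e_0..e_5) and H = m = span(e_6,e_7) *)
Definition vproj (R : realType) (u : 'rV[R]_8) : 'rV[R]_8 :=
  \row_i (if (i < 6)%N then u 0 i else 0).
Definition hproj (R : realType) (u : 'rV[R]_8) : 'rV[R]_8 :=
  \row_i (if (6 <= i)%N then u 0 i else 0).

Definition inV (R : realType) (u : 'rV[R]_8) : Prop := hproj u = 0.
Definition inH (R : realType) (u : 'rV[R]_8) : Prop := vproj u = 0.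

Definition BH (R : realType) (nabla : 'rV[R]_8 -> 'rV[R]_8 -> 'rV[R]_8) (E F : 'rV[R]_8) :=
  2^-1 *: vproj (nabla E F + nabla F E).
Definition BV (R : realType) (nabla : 'rV[R]_8 -> 'rV[R]_8 -> 'rV[R]_8) (E F : 'rV[R]_8) :=
  2^-1 *: hproj (nabla E F + nabla F E).

Definition conformal_foliation (R : realType) (eps : 'I_8 -> R)
  (nabla : 'rV[R]_8 -> 'rV[R]_8 -> 'rV[R]_8) : Prop :=
  exists V0 : 'rV[R]_8, inV V0 /\
    forall E F, inH E -> inH F -> BH nabla E F = metric eps E F *: V0.

Definition semi_riemannian_foliation (R : realType)
  (nabla : 'rV[R]_8 -> 'rV[R]_8 -> 'rV[R]_8) : Prop :=
  forall E F, inH E -> inH F -> BH nabla E F = 0.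

(* trace of B^V w.r.t. the orthonormal basis e_0..e_5 of V *)
Definition minimal_foliation (R : realType) (eps : 'I_8 -> R)
  (nabla : 'rV[R]_8 -> 'rV[R]_8 -> 'rV[R]_8) : Prop :=
  \sum_(i < 8 | (i < 6)%N) eps i *: BV nabla (e R i) (e R i) = 0.

Definition totally_geodesic_foliation (R : realType)
  (nabla : 'rV[R]_8 -> 'rV[R]_8 -> 'rV[R]_8) : Prop :=
  forall E F, inV E -> inV F -> BV nabla E F = 0.

(* By the Koszul formula, g(nabla_U V + nabla_V U, W) = g([W,U],V) + g(U,[W,V]):
   the W-component of both second fundamental forms measures how far ad_W is
   from being skew-adjoint.  For W in k and U, V in m this vanishes because
   [k,m] lies in k, which is orthogonal to m, so the foliation is
   semi-Riemannian.
   For W in m and U = V = e_i in k it is 2 g([W,e_i],e_i), and the given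
   [e_i,W] has no e_i-component, so the foliation is minimal.  Finally B^V = 0
   iff ad_X and ad_Y are skew-adjoint on k, and on the basis pairs of k these
   two skewness conditions are exactly the twelve displayed equations. *)

From HB Require Import structures.
From mathcomp Require Import all_boot all_order all_algebra.
From mathcomp Require Import reals ring lra.
Import Order.TTheory GRing.Theory Num.Theory.
Local Open Scope ring_scope.

Lemma k_index_ind (P : 'I_8 -> Prop) :
  P iA -> P iB -> P iC -> P iR -> P iS -> P iT -> forall i : 'I_8, (i < 6)%N -> P i.
Proof.
by move=> ? ? ? ? ? ? [[|[|[|[|[|[|n]]]]]] lti] //= _; rewrite (bool_irrelevance lti erefl).
Qed.

Lemma m_index_ind (P : 'I_8 -> Prop) : P iX -> P iY -> forall k : 'I_8, (6 <= k)%N -> P k.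
Proof.
by move=> ? ? [[|[|[|[|[|[|[|[|n]]]]]]]] ltk] //= _; rewrite (bool_irrelevance ltk erefl).
Qed.

Section Metric.
Context {R : realType} (eps : 'I_8 -> R).
Implicit Types (u v w : 'rV[R]_8) (a : R).

Lemma metricC u v : metric eps u v = metric eps v u.
Proof. by apply: eq_bigr => i _; rewrite mulrAC. Qed.

Lemma metric_linear u v w a :
  metric eps (a *: u + v) w = a * metric eps u w + metric eps v w.
Proof.
rewrite /metric mulr_sumr -big_split; apply: eq_bigr => i _ /=; rewrite !mxE; ring.
Qed.

Lemma metricDl u v w : metric eps (u + v) w = metric eps u w + metric eps v w.
Proof. by rewrite -{1}[u]scale1r metric_linear mul1r. Qed.

Lemma metricNl u w : metric eps (- u) w = - metric eps u w.
Proof. by rewrite /metric -sumrN; apply: eq_bigr => i _; rewrite mxE mulrN mulNr. Qed.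

Lemma metricDr u v w : metric eps w (u + v) = metric eps w u + metric eps w v.
Proof. by rewrite !(metricC w) metricDl. Qed.

Lemma metricNr u w : metric eps w (- u) = - metric eps w u.
Proof. by rewrite !(metricC w) metricNl. Qed.

Lemma metric_e u k : metric eps u (e R k) = eps k * u 0 k.
Proof.
rewrite /metric (bigD1 k) //= big1 => [|i /negbTE ik]; first by rewrite mxE !eqxx addr0 mulr1.
by rewrite mxE ik andbF mulr0.
Qed.

Lemma metric_VH u v : inV u -> inH v -> metric eps u v = 0.
Proof.
move=> /rowP hu /rowP hv; apply: big1 => i _.
have := hu i; have := hv i; rewrite !mxE.
by case: ltnP => _ /=; [move=> -> _ | move=> _ ->]; rewrite ?(mulr0, mul0r).
Qed.

Hypothesis eps_sign : signs eps.

Lemma eps_neq0 k : eps k != 0.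
Proof. by case: (eps_sign k) => ->; rewrite ?oppr_eq0 oner_eq0. Qed.

Lemma coord_metric u k : u 0 k = eps k * metric eps u (e R k).
Proof. by rewrite metric_e mulrA; case: (eps_sign k) => ->; rewrite ?mulrNN !mul1r. Qed.

End Metric.

Section Coordinates.
Context {R : realType}.
Implicit Types u : 'rV[R]_8.

Lemma inVP u : inV u <-> forall k : 'I_8, (6 <= k)%N -> u 0 k = 0.
Proof.
split=> [/rowP hu k hk | hu]; first by have := hu k; rewrite !mxE hk.
by apply/rowP => k; rewrite !mxE; case: leqP => // /hu.
Qed.

Lemma inHP u : inH u <-> forall i : 'I_8, (i < 6)%N -> u 0 i = 0.
Proof.
split=> [/rowP hu i hi | hu]; first by have := hu i; rewrite !mxE hi.
by apply/rowP => i; rewrite !mxE; case: ltnP => // /hu.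
Qed.

Lemma inV_e {i : 'I_8} : (i < 6)%N -> inV (e R i).
Proof.
move=> hi; apply/inVP => k hk; rewrite mxE eqxx /=.
by case: eqP => // ki; rewrite ki leqNgt hi in hk.
Qed.

Lemma linear_eq0_on (f : 'rV[R]_8 -> R) (P : pred 'I_8) :
  (forall a u v, f (a *: u + v) = a * f u + f v) ->
  (forall i, P i -> f (e R i) = 0) ->
  forall u, (forall i, ~~ P i -> u 0 i = 0) -> f u = 0.
Proof.
move=> f_lin f_e u u_out; rewrite (row_sum_delta u).
elim/big_rec: _ => [|i w _ fw].
  by have := f_lin 1 0 0; rewrite scale1r addr0 mul1r; lra.
rewrite f_lin fw addr0; have [/f_e ->|/u_out ->] := boolP (P i); by rewrite ?mulr0 ?mul0r.
Qed.

Lemma linear_eq0_onV (f : 'rV[R]_8 -> R) :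
  (forall a u v, f (a *: u + v) = a * f u + f v) ->
  (forall i : 'I_8, (i < 6)%N -> f (e R i) = 0) -> forall u, inV u -> f u = 0.
Proof.
move=> f_lin f_e u /inVP hu; apply: (linear_eq0_on _ (fun i => i < 6)%N f_lin f_e) => i.
by rewrite -leqNgt; apply: hu.
Qed.

Lemma linear_eq0_onH (f : 'rV[R]_8 -> R) :
  (forall a u v, f (a *: u + v) = a * f u + f v) ->
  (forall i : 'I_8, (6 <= i)%N -> f (e R i) = 0) -> forall u, inH u -> f u = 0.
Proof.
move=> f_lin f_e u /inHP hu; apply: (linear_eq0_on _ (fun i => 6 <= i)%N f_lin f_e) => i.
by rewrite -ltnNge; apply: hu.
Qed.

End Coordinates.

Definition ad_sym {R : realType} (eps : 'I_8 -> R)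
    (br : 'rV[R]_8 -> 'rV[R]_8 -> 'rV[R]_8) (x u v : 'rV[R]_8) : R :=
  metric eps (br x u) v + metric eps u (br x v).

Definition ad_skew_on_k {R : realType} (eps : 'I_8 -> R)
    (br : 'rV[R]_8 -> 'rV[R]_8 -> 'rV[R]_8) (x : 'rV[R]_8) : Prop :=
  forall i j : 'I_8, (i < 6)%N -> (j < 6)%N -> ad_sym eps br x (e R i) (e R j) = 0.

Section LeviCivita.
Context {R : realType} {eps : 'I_8 -> R} {br nabla : 'rV[R]_8 -> 'rV[R]_8 -> 'rV[R]_8}.
Hypotheses (eps_sign : signs eps) (br_lie : is_lie_bracket br)
  (nabla_lc : is_levi_civita eps br nabla).
Implicit Types (x u v w : 'rV[R]_8) (a : R).

Lemma br_linear x a u v : br x (a *: u + v) = a *: br x u + br x v.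
Proof. by case: br_lie => _ []. Qed.

Lemma ad_symC x u v : ad_sym eps br x u v = ad_sym eps br x v u.
Proof. by rewrite /ad_sym addrC; congr (_ + _); apply: metricC. Qed.

Lemma ad_sym_linear x a u v w :
  ad_sym eps br x (a *: u + v) w = a * ad_sym eps br x u w + ad_sym eps br x v w.
Proof.
by rewrite /ad_sym br_linear !metric_linear; ring.
Qed.

Lemma koszul u v w : metric eps (nabla u v + nabla v u) w = ad_sym eps br w u v.
Proof.
case: nabla_lc => torsion compat; case: br_lie => _ [_ [anti _]].
have nabla_swap y z : nabla y z = nabla z y - br z y.
  by rewrite (anti z y) opprK -torsion addrC subrK.
have := compat u v w; have := compat v u w; have := compat w u v.
rewrite /ad_sym metricDl (nabla_swap u w) (nabla_swap v w) !metricDr !metricNr.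
rewrite !(metricC eps v); lra.
Qed.

Lemma sym_nabla_coord u v k :
  (nabla u v + nabla v u) 0 k = eps k * ad_sym eps br (e R k) u v.
Proof. by rewrite (coord_metric _ eps_sign) koszul. Qed.

Lemma BH_coord u v k : BH nabla u v 0 k =
  if (k < 6)%N then 2^-1 * (eps k * ad_sym eps br (e R k) u v) else 0.
Proof. by rewrite /BH !mxE -sym_nabla_coord mxE; case: ifP; rewrite ?mulr0. Qed.

Lemma BV_coord u v k : BV nabla u v 0 k =
  if (6 <= k)%N then 2^-1 * (eps k * ad_sym eps br (e R k) u v) else 0.
Proof. by rewrite /BV !mxE -sym_nabla_coord mxE; case: ifP; rewrite ?mulr0. Qed.

Lemma semi_riemannian_of_km_sub_k :
  (forall i j : 'I_8, (i < 6)%N -> (6 <= j)%N -> inV (br (e R i) (e R j))) ->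
  semi_riemannian_foliation nabla.
Proof.
move=> km_sub_k u v hu hv; apply/rowP => k; rewrite BH_coord mxE; case: ifP => // hk.
have ad_mH w z : inH w -> inH z -> metric eps (br (e R k) w) z = 0.
  move=> hw hz; apply: (linear_eq0_onH (metric eps ^~ z \o br (e R k))) hw => [a y y'|j hj].
    by rewrite /= br_linear metric_linear.
  exact: metric_VH (km_sub_k k j hk hj) hz.
by rewrite /ad_sym ad_mH // metricC ad_mH // addr0 !mulr0.
Qed.

Lemma minimal_of_ad_diag :
  (forall i k : 'I_8, (i < 6)%N -> (6 <= k)%N -> br (e R k) (e R i) 0 i = 0) ->
  minimal_foliation eps nabla.
Proof.
move=> ad_diag; apply: big1 => i hi.
suff -> : BV nabla (e R i) (e R i) = 0 by rewrite scaler0.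
apply/rowP => k; rewrite BV_coord mxE; case: ifP => // hk.
by rewrite /ad_sym (metricC eps (e R i)) !metric_e ad_diag // mulr0 addr0 !mulr0.
Qed.

Lemma ad_sym_eq0_on_k x : ad_skew_on_k eps br x ->
  forall u v, inV u -> inV v -> ad_sym eps br x u v = 0.
Proof.
move=> skew u v hu hv.
apply: (linear_eq0_onV (ad_sym eps br x ^~ v)) hu => [a y y'|i hi].
  exact: ad_sym_linear.
rewrite ad_symC; apply: (linear_eq0_onV (ad_sym eps br x ^~ (e R i))) hv => [a y y'|j hj].
  exact: ad_sym_linear.
by rewrite ad_symC skew.
Qed.

Lemma totally_geodesicP : totally_geodesic_foliation nabla <->
  ad_skew_on_k eps br (e R iX) /\ ad_skew_on_k eps br (e R iY).
Proof.
have BV_eq0 u v : BV nabla u v = 0 <->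
    forall k : 'I_8, (6 <= k)%N -> ad_sym eps br (e R k) u v = 0.
  split=> [/rowP BV0 k hk | ad0]; last first.
    by apply/rowP => k; rewrite BV_coord mxE; case: ifP => // hk; rewrite ad0 // !mulr0.
  have /eqP := BV0 k; rewrite BV_coord hk mxE !mulf_eq0 invr_eq0 pnatr_eq0 /=.
  by rewrite (negbTE (eps_neq0 _ eps_sign k)) => /eqP.
split=> [tg | [skX skY] u v hu hv].
  by split=> i j hi hj; have /BV_eq0 := tg _ _ (inV_e hi) (inV_e hj); apply.
by apply/BV_eq0; apply: m_index_ind; apply: ad_sym_eq0_on_k.
Qed.

End LeviCivita.

Section KMBracketTable.
Context {R : realType} (eps : 'I_8 -> R) {br : 'rV[R]_8 -> 'rV[R]_8 -> 'rV[R]_8}.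
Context {x : 'rV[R]_8} {b c c' s t t' : R}.
Hypothesis br_anti : forall u v, br u v = - br v u.
Hypotheses
  (brA : br (e R iA) x = - (b *: e R iB) - c *: e R iC)
  (brB : br (e R iB) x = b *: e R iA - c' *: e R iC)
  (brC : br (e R iC) x = c *: e R iA + c' *: e R iB)
  (brR : br (e R iR) x = s *: e R iS + t *: e R iT)
  (brS : br (e R iS) x = s *: e R iR - t' *: e R iT)
  (brT : br (e R iT) x = t *: e R iR + t' *: e R iS).

Lemma km_table_in_k (i : 'I_8) : (i < 6)%N -> inV (br (e R i) x).
Proof.
by move: i; apply: k_index_ind; apply/inVP; apply: m_index_ind;
  rewrite ?(brA, brB, brC, brR, brS, brT) !mxE /=; ring.
Qed.

Lemma km_table_ad_diag (i : 'I_8) : (i < 6)%N -> br x (e R i) 0 i = 0.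
Proof.
by move: i; apply: k_index_ind; rewrite br_anti ?(brA, brB, brC, brR, brS, brT) !mxE /=; ring.
Qed.

Lemma ad_sym_basis i j :
  ad_sym eps br x (e R i) (e R j) = - (eps j * br (e R i) x 0 j + eps i * br (e R j) x 0 i).
Proof. by rewrite /ad_sym !(br_anti x) metricNl metricNr (metricC eps (e R i)) !metric_e; ring. Qed.

Lemma km_table_skewP : ad_skew_on_k eps br x <->
  [/\ (eps iB - eps iA) * b = 0, (eps iC - eps iA) * c = 0 & (eps iC - eps iB) * c' = 0] /\
  [/\ (eps iS + eps iR) * s = 0, (eps iT + eps iR) * t = 0 & (eps iT - eps iS) * t' = 0].
Proof.
split=> [skew | eqs i j hi].
  do 2 split; [have := skew iA iB | have := skew iA iC | have := skew iB iC
              | have := skew iR iS | have := skew iR iT | have := skew iS iT];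
  by move=> /(_ isT isT); rewrite ad_sym_basis ?(brA, brB, brC, brR, brS, brT) !mxE /=; lra.
case: eqs => [[? ? ?] [? ? ?]]; move: i hi j; apply: k_index_ind; apply: k_index_ind;
  by rewrite ad_sym_basis ?(brA, brB, brC, brR, brS, brT) !mxE /=; lra.
Qed.

End KMBracketTable.

Theorem theorem7p2 (R : realType) (eps : 'I_8 -> R)
  (br nabla : 'rV[R]_8 -> 'rV[R]_8 -> 'rV[R]_8)
  (b11 b21 c11 c21 c12 c22 s14 s24 t14 t24 t15 t25 : R) :
  signs eps ->
  is_lie_bracket br ->
  is_levi_civita eps br nabla ->
  (* k = su(2) x sl_2(R) *)
  br (e R iA) (e R iB) = 2 *: e R iC ->
  br (e R iC) (e R iA) = 2 *: e R iB ->
  br (e R iB) (e R iC) = 2 *: e R iA ->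
  br (e R iR) (e R iS) = 2 *: e R iT ->
  br (e R iT) (e R iR) = 2 *: e R iS ->
  br (e R iS) (e R iT) = - (2 *: e R iR) ->
  br (e R iA) (e R iR) = 0 -> br (e R iA) (e R iS) = 0 -> br (e R iA) (e R iT) = 0 ->
  br (e R iB) (e R iR) = 0 -> br (e R iB) (e R iS) = 0 -> br (e R iB) (e R iT) = 0 ->
  br (e R iC) (e R iR) = 0 -> br (e R iC) (e R iS) = 0 -> br (e R iC) (e R iT) = 0 ->
  (* the foliation generated by K is conformal *)
  conformal_foliation eps nabla ->
  (* form of the brackets [k, m] *)
  br (e R iA) (e R iX) = - (b11 *: e R iB) - c11 *: e R iC ->
  br (e R iA) (e R iY) = - (b21 *: e R iB) - c21 *: e R iC ->
  br (e R iB) (e R iX) = b11 *: e R iA - c12 *: e R iC ->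
  br (e R iB) (e R iY) = b21 *: e R iA - c22 *: e R iC ->
  br (e R iC) (e R iX) = c11 *: e R iA + c12 *: e R iB ->
  br (e R iC) (e R iY) = c21 *: e R iA + c22 *: e R iB ->
  br (e R iR) (e R iX) = s14 *: e R iS + t14 *: e R iT ->
  br (e R iR) (e R iY) = s24 *: e R iS + t24 *: e R iT ->
  br (e R iS) (e R iX) = s14 *: e R iR - t15 *: e R iT ->
  br (e R iS) (e R iY) = s24 *: e R iR - t25 *: e R iT ->
  br (e R iT) (e R iX) = t14 *: e R iR + t15 *: e R iS ->
  br (e R iT) (e R iY) = t24 *: e R iR + t25 *: e R iS ->
  [/\ semi_riemannian_foliation nabla,
      minimal_foliation eps nabla &
      (totally_geodesic_foliation nabla <->
        ((eps iB - eps iA) * b11 = 0 /\ (eps iB - eps iA) * b21 = 0 /\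
         (eps iC - eps iA) * c11 = 0 /\ (eps iC - eps iA) * c21 = 0 /\
         (eps iC - eps iB) * c12 = 0 /\ (eps iC - eps iB) * c22 = 0 /\
         (eps iS + eps iR) * s14 = 0 /\ (eps iS + eps iR) * s24 = 0 /\
         (eps iT + eps iR) * t14 = 0 /\ (eps iT + eps iR) * t24 = 0 /\
         (eps iT - eps iS) * t15 = 0 /\ (eps iT - eps iS) * t25 = 0))].
Proof.
move=> sgn lie lc _ _ _ _ _ _ _ _ _ _ _ _ _ _ _ _
  brAX brAY brBX brBY brCX brCY brRX brRY brSX brSY brTX brTY.
have anti : forall u v, br u v = - br v u by case: lie => _ [_ []].
split.
- apply: (semi_riemannian_of_km_sub_k sgn lie lc) => i j hi; move: j; apply: m_index_ind.
    exact: km_table_in_k brAX brBX brCX brRX brSX brTX _ hi.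
  exact: km_table_in_k brAY brBY brCY brRY brSY brTY _ hi.
- apply: (minimal_of_ad_diag sgn lie lc) => i j hi; move: j; apply: m_index_ind.
    exact: km_table_ad_diag anti brAX brBX brCX brRX brSX brTX _ hi.
  exact: km_table_ad_diag anti brAY brBY brCY brRY brSY brTY _ hi.
have [skX_eqs eqs_skX] := km_table_skewP eps anti brAX brBX brCX brRX brSX brTX.
have [skY_eqs eqs_skY] := km_table_skewP eps anti brAY brBY brCY brRY brSY brTY.
apply: iff_trans (totally_geodesicP sgn lie lc) _; split.
  by case=> /skX_eqs[[? ? ?] [? ? ?]] /skY_eqs[[? ? ?] [? ? ?]].
move=> [? [? [? [? [? [? [? [? [? [? [? ?]]]]]]]]]]].
by split; [apply: eqs_skX | apply: eqs_skY].
Qed.
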